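(* Let $(X,d)$ be a compact metric space and $f_{1,\infty}=\{f_n\}$ a sequence of continuous surjective maps $f_n:X\to X$ converging uniformly to $f:X\to X$, such that $\{f_n^k\}_{k\in\mathbb{N}}$ converges collectively to $\{f^k\}_{k\in\mathbb{N}}$ and $f_{1,\infty}$ is feebly open. Then $(X,f_{1,\infty})$ is strongly multi-sensitive if and only if $(X,f)$ is strongly multi-sensitive; and $(X,f_{1,\infty})$ is $\mathcal{N}$-sensitive if and only if $(X,f)$ is $\mathcal{N}$-sensitive.
   Context: Write $f_i^n=f_{n+i-1}\circ\cdots\circ f_i$, $f_i^0=\mathrm{id}$; an autonomous system $(X,f)$ is the case $f_n=f$ for all $n$ (so $f_i^n=f^n$). Collective convergence: for every $\epsilon>0$ there is $N_0\in\mathbb{N}$ such that $D(f_N^k,f^k)<\epsilon$ for all $N\ge N_0$ and all $k\in\mathbb{N}$, where $D$ is the supremum metric on continuous self-maps of $X$. Feebly open: $\mathrm{int}(f_n(U))\ne\varnothing$ for every nonempty open $U\subseteq X$ and every $n$. $f_{1,\infty}^{[k]}=\{f^k_{k(n-1)+1}\}_{n=1}^\infty$ (its $n$-fold composition from index $1$ is $f_1^{kn}$). $N_{f_{1,\infty}}(V,\delta)=\{n\in\mathbb{N}:\exists u,v\in V,\ d(f_1^n(u),f_1^n(v))>\delta\}$. For $\mathbf{v}=(v_1,\dots,v_r)\in\mathbb{N}^r$, the system is multi-sensitive with respect to $\mathbf{v}$ if there is $\delta>0$ such that $\bigcap_{i=1}^r N_{f_{1,\infty}^{[v_i]}}(U_i,\delta)\ne\varnothing$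 for all nonempty open $U_1,\dots,U_r$; $\mathcal{N}$-sensitive if multi-sensitive with respect to $(1,\dots,n)$ for every $n$; strongly multi-sensitive if multi-sensitive with respect to every vector in $\mathbb{N}^r$, for every $r$. *)

From HB Require Import structures.
From mathcomp Require Import all_boot all_order all_algebra.
From mathcomp Require Import all_classical all_reals all_analysis.
Set Implicit Arguments. Unset Strict Implicit. Unset Printing Implicit Defensive.
Import Order.TTheory GRing.Theory Num.Theory.
Local Open Scope classical_set_scope.
Local Open Scope ring_scope.

Section Defs.
Context {R : realType} {X : metricType R}.

Definition supD (g h : X -> X) : R :=
  sup (range (fun x => mdist (g x) (h x))).

(* Non-autonomous system: sequence f : nat -> X -> X, only indices n >= 1 used.
   comp f i n = f_i^n = f_{n+i-1} o ... o f_i, comp f i 0 = id. *)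
Fixpoint comp (f : nat -> X -> X) (i n : nat) : X -> X :=
  match n with
  | 0 => id
  | n'.+1 => f (i + n')%N \o comp f i n'
  end.

Definition autonomous (g : X -> X) : nat -> X -> X := fun _ => g.

Definition blk (f : nat -> X -> X) (k : nat) : nat -> X -> X :=
  fun n => comp f (k * (n - 1) + 1)%N k.

Definition Nset (f : nat -> X -> X) (V : set X) (delta : R) : set nat :=
  [set n | (0 < n)%N /\ exists u v, V u /\ V v /\
     delta < mdist (comp f 1 n u) (comp f 1 n v)].

Definition multi_sensitive_wrt (f : nat -> X -> X) (r : nat) (v : 'I_r -> nat) :=
  exists2 delta : R, 0 < delta &
    forall U : 'I_r -> set X,
      (forall i, open (U i) /\ U i !=set0) ->
      exists n, forall i, Nset (blk f (v i)) (U i) delta n.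

Definition N_sensitive (f : nat -> X -> X) :=
  forall n : nat, (0 < n)%N ->
    multi_sensitive_wrt f (fun i : 'I_n => (nat_of_ord i).+1).

Definition strongly_multi_sensitive (f : nat -> X -> X) :=
  forall (r : nat) (v : 'I_r -> nat), (0 < r)%N -> (forall i, (0 < v i)%N) ->
    multi_sensitive_wrt f v.

Definition collectively_converges (f : nat -> X -> X) (g : X -> X) :=
  forall eps : R, 0 < eps -> exists N0 : nat, forall N k : nat,
    (N0 <= N)%N -> (0 < N)%N -> (0 < k)%N ->
    supD (comp f N k) (comp (autonomous g) 1 k) < eps.

Definition feebly_open (f : nat -> X -> X) :=
  forall n : nat, (0 < n)%N -> forall U : set X, open U -> U !=set0 ->
    (f n @` U)° !=set0.

End Defs.

(* Both directions compare the non-autonomous separation at time k(N0 + n)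
   with the autonomous one at time kn: by collective convergence the tail
   f_{kN0+1}^{kn} is uniformly close to g^{kn} once N0 is large, so these
   separations differ by less than any prescribed constant.  From g to the
   sequence, the open sets U_i are first pushed forward by f_1^{v_i N0}, which
   keeps them with nonempty interior (feeble openness).  From the sequence to
   g, one pulls U_i back along f_1^{v_i N0} (surjectivity and continuity) to an
   open set on which the first N0 block iterates stay smaller than the
   sensitivity constant; this forces the separation time beyond N0. *)
From Pilot Require Import Defs.
From HB Require Import structures.
From mathcomp Require Import all_boot all_order all_algebra.
From mathcomp Require Import all_classical all_reals all_analysis.
From mathcomp Require Import lra zify.
Import Order.TTheory GRing.Theory Num.Theory.
Import numFieldTopology.Exports numFieldNormedType.Exports.
Local Open Scope classical_set_scope.
Local Open Scope ring_scope.

Local Notation comp := Defs.comp.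

Section Compositions.
Context {R : realType} {X : metricType R}.
Implicit Types (f : nat -> X -> X) (i n : nat).

Lemma compD f i a b : comp f i (a + b) = comp f (i + a) b \o comp f i a.
Proof.
apply: funext => x; elim: b => [|b IH]; first by rewrite addn0.
by rewrite addnS /= IH addnA.
Qed.

Lemma comp_blk f k n : comp (blk f k) 1 n = comp f 1 (k * n).
Proof.
elim: n => [|n IH]; first by rewrite muln0.
rewrite /= IH /blk; have -> : (k * (1 + n - 1) + 1 = 1 + k * n)%N by lia.
by rewrite mulnS (addnC k) compD.
Qed.

Lemma comp_surjective f i n : (0 < i)%N ->
  (forall m, (0 < m)%N -> forall y, exists x, f m x = y) ->
  forall y, exists x, comp f i n x = y.
Proof.
move=> i_gt0 f_surj; elim: n => [|n IH] y; first by exists y.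
have [z <-] := f_surj (i + n)%N (leq_trans i_gt0 (leq_addr _ _)) y.
by have [x <-] := IH z; exists x.
Qed.

Lemma comp_continuous f i n : (0 < i)%N ->
  (forall m, (0 < m)%N -> continuous (f m)) -> continuous (comp f i n).
Proof.
move=> i_gt0 f_cont; elim: n => [|n IH] x /=; first exact: cvg_id.
apply: continuous_comp; first exact: IH.
exact: f_cont (leq_trans i_gt0 (leq_addr _ _)) _.
Qed.

Lemma comp_feebly_open f i n : (0 < i)%N -> feebly_open f ->
  forall U : set X, open U -> U !=set0 -> (comp f i n @` U)° !=set0.
Proof.
move=> i_gt0 f_open; elim: n => [|n IH] U U_open U_n0.
  by rewrite /= image_id (interior_id _).1.
have [y Iy] := IH U U_open U_n0.
have [z Iz] := f_open (i + n)%N (leq_trans i_gt0 (leq_addr _ _)) _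
  (@open_interior _ (comp f i n @` U)) (ex_intro _ y Iy).
exists z; apply: interiorS Iz => _ [_ /interior_subset [a Ua <-] <-].
by exists a.
Qed.

End Compositions.

Section MetricFacts.
Context {R : realType} {X : metricType R}.

Lemma compact_mdist_bounded : compact [set: X] ->
  exists M : R, forall x y : X, mdist x y <= M.
Proof.
move=> X_compact; have [a|X0] := pselect (exists a : X, True); last first.
  by exists 0 => x; exfalso; apply: X0; exists x.
case: a => a _.
have [|M0 [_ aM0]] := (compact_near_coveringP _).1 X_compact R (pinfty_nbhs R)
    (fun M x => mdist a x < M).
  move=> x _; exists (ball x 1, [set M | mdist a x + 1 < M]).
    by split; [exact: nbhsx_ballx | apply: nbhs_pinfty_gt; exact: num_real].
  case=> y M [/= + aM]; rewrite ballEmdist /= => xy.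
  by have := metric_triangle a x y; lra.
exists ((M0 + 1) + (M0 + 1)) => x y.
apply: (le_trans (metric_triangle x a y)); rewrite metric_sym.
by have := aM0 (M0 + 1) ltac:(lra) x I; have := aM0 (M0 + 1) ltac:(lra) y I; lra.
Qed.

(* The hypothesis matters: [sup] of a set that is not bounded above is [0]. *)
Lemma mdist_le_supD {M : R} : (forall x y : X, mdist x y <= M) ->
  forall (h k : X -> X) x, mdist (h x) (k x) <= supD h k.
Proof.
move=> X_bounded h k x; apply: ub_le_sup; last by exists x.
by exists M => _ [y _ <-].
Qed.

Lemma ler_dist_mdist (a b a' b' : X) :
  `|mdist a b - mdist a' b'| <= mdist a a' + mdist b b'.
Proof.
rewrite ler_distl; apply/andP; split.
- have := metric_triangle a' a b'; have := metric_triangle a b b'.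
  by rewrite (metric_sym a' a); lra.
- have := metric_triangle a a' b; have := metric_triangle a' b' b.
  by rewrite (metric_sym b' b); lra.
Qed.

Lemma open_preimage_small_orbits (F : nat -> X -> X) (N : nat) (U : set X)
    (e : R) : 0 < e -> (forall m, continuous (F m)) ->
  (forall y, exists x, F N x = y) -> open U -> U !=set0 ->
  exists V : set X, [/\ open V, V !=set0, F N @` V `<=` U &
    forall m a b, (m <= N)%N -> V a -> V b -> mdist (F m a) (F m b) < e].
Proof.
move=> e_gt0 F_cont F_surj U_open [y Uy]; have [x Fxy] := F_surj y.
pose P z := U (F N z) /\ forall m : 'I_N.+1, mdist (F m x) (F m z) < e / 2.
have P_near : \forall z \near x, P z.
  apply: filterI; first by apply: F_cont; apply: open_nbhs_nbhs; rewrite Fxy.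
  apply: (@filter_forall _ _ (fun (m : 'I_N.+1) z => mdist (F m x) (F m z) < e / 2)) => m.
  have e2_gt0 : 0 < e / 2 by lra.
  have := F_cont m x _ (nbhsx_ballx (F m x) _ e2_gt0).
  by rewrite ballEmdist.
exists P°; split.
- exact: open_interior.
- by exists x; exact: nbhs_singleton (nbhs_interior P_near).
- by move=> _ [z /interior_subset [] ? _ <-].
- move=> m a b mN /interior_subset [_ Pa] /interior_subset [_ Pb].
  have := Pa (Ordinal (mN : (m < N.+1)%N)); have := Pb (Ordinal (mN : (m < N.+1)%N)).
  have := metric_triangle (F m a) (F m x) (F m b).
  by rewrite (metric_sym (F m a) (F m x)); lra.
Qed.

End MetricFacts.

Section Transfer.
Context {R : realType} {X : metricType R}.
Variables (f : nat -> X -> X) (g : X -> X).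
Hypotheses (X_compact : compact [set: X]) (fg : collectively_converges f g).

Lemma collectively_converges_tail (e : R) : 0 < e ->
  exists N0, forall k n (a b : X), (0 < k)%N -> (0 < n)%N ->
  `|mdist (comp f 1 (k * (N0 + n)) a) (comp f 1 (k * (N0 + n)) b) -
    mdist (comp (autonomous g) 1 (k * n) (comp f 1 (k * N0) a))
          (comp (autonomous g) 1 (k * n) (comp f 1 (k * N0) b))| < e.
Proof.
move=> e_gt0; have [M X_bounded] := compact_mdist_bounded X_compact.
have [N0 fgN0] := fg (e / 2) ltac:(lra).
exists N0 => k n a b k_gt0 n_gt0; rewrite mulnDr compD /=.
have close x : mdist (comp f (1 + k * N0) (k * n) x)
                     (comp (autonomous g) 1 (k * n) x) < e / 2.
  apply: le_lt_trans (mdist_le_supD X_bounded _ _ x) _.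
  by apply: fgN0; [nia | rewrite addn_gt0 | rewrite muln_gt0 k_gt0].
apply: le_lt_trans (ler_dist_mdist _ _ _ _) _.
by have := close (comp f 1 (k * N0) a); have := close (comp f 1 (k * N0) b); lra.
Qed.

Variables (r : nat) (v : 'I_r -> nat).
Hypothesis v_gt0 : forall i, (0 < v i)%N.

Lemma multi_sensitive_from_limit : feebly_open f ->
  multi_sensitive_wrt (autonomous g) v -> multi_sensitive_wrt f v.
Proof.
move=> f_open [d d_gt0 g_sens].
have d2_gt0 : 0 < d / 2 by lra.
have [N0 tail] := collectively_converges_tail (d / 2) d2_gt0.
exists (d / 2) => // U U_open.
pose U' i := (comp f 1 (v i * N0) @` U i)°.
have [|n sep] := g_sens U'.
  move=> i; split; first exact: open_interior.
  by apply: comp_feebly_open; [|exact: f_open|exact: (U_open i).1|exact: (U_open i).2].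
exists (N0 + n)%N => i; have [n_gt0 [u' [w' [Uu [Uw sep_g]]]]] := sep i.
have [u Uiu fu] := interior_subset Uu; have [w Uiw fw] := interior_subset Uw.
rewrite comp_blk -fu -fw in sep_g.
split; first by rewrite addn_gt0 n_gt0 orbT.
exists u, w; do 2!split => //; rewrite comp_blk.
by move: (tail (v i) n u w (v_gt0 i) n_gt0); rewrite ltr_distl; lra.
Qed.

Hypotheses (f_cont : forall n, (0 < n)%N -> continuous (f n))
  (f_surj : forall n, (0 < n)%N -> forall y, exists x, f n x = y).

Lemma multi_sensitive_to_limit :
  multi_sensitive_wrt f v -> multi_sensitive_wrt (autonomous g) v.
Proof.
move=> [d d_gt0 f_sens].
have d2_gt0 : 0 < d / 2 by lra.
have [N0 tail] := collectively_converges_tail (d / 2) d2_gt0.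
exists (d / 2) => // U U_open.
have pullback i : exists W : set X, [/\ open W, W !=set0,
    comp f 1 (v i * N0) @` W `<=` U i &
    forall m a b, (m <= N0)%N -> W a -> W b ->
      mdist (comp f 1 (v i * m) a) (comp f 1 (v i * m) b) < d].
  apply: (open_preimage_small_orbits (fun m => comp f 1 (v i * m)) N0) d_gt0 _ _
    (U_open i).1 (U_open i).2.
  - by move=> m; exact: comp_continuous.
  - exact: comp_surjective.
have [V V_spec] := choice pullback.
have [|n sep] := f_sens V; first by move=> i; have [] := V_spec i.
exists (n - N0)%N => i; have [_ [a [b [Va [Vb sep_f]]]]] := sep i.
rewrite comp_blk in sep_f.
have [_ _ VU V_small] := V_spec i.
have N0n : (N0 < n)%N.
  by rewrite ltnNge; apply/negP => nN0; have := V_small n a b nN0 Va Vb; lra.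
rewrite -(subnKC (ltnW N0n)) in sep_f.
split; first by rewrite subn_gt0.
exists (comp f 1 (v i * N0) a), (comp f 1 (v i * N0) b).
split; first by apply: VU; exists a.
split; first by apply: VU; exists b.
rewrite comp_blk.
by move: (tail (v i) (n - N0)%N a b (v_gt0 i)); rewrite subn_gt0 ltr_distl => /(_ N0n); lra.
Qed.

End Transfer.

Theorem mainTheorem7 (R : realType) (X : metricType R)
  (f : nat -> X -> X) (g : X -> X) :
  compact [set: X] ->
  (forall n, (0 < n)%N -> continuous (f n)) ->
  (forall n, (0 < n)%N -> forall y : X, exists x : X, f n x = y) ->
  (fun n => supD (f n) g) @ \oo --> (0 : R) ->
  collectively_converges f g ->
  feebly_open f ->
  (strongly_multi_sensitive f <-> strongly_multi_sensitive (autonomous g)) /\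
  (N_sensitive f <-> N_sensitive (autonomous g)).
Proof.
(* Uniform convergence is collective convergence at k = 1, hence not needed. *)
move=> X_compact f_cont f_surj _ fg f_open.
have to_g r (v : 'I_r -> nat) v_gt0 :=
  multi_sensitive_to_limit f g X_compact fg r v v_gt0 f_cont f_surj.
have from_g r (v : 'I_r -> nat) v_gt0 :=
  multi_sensitive_from_limit f g X_compact fg r v v_gt0 f_open.
split; split.
- by move=> sens r v r_gt0 v_gt0; apply/to_g/sens.
- by move=> sens r v r_gt0 v_gt0; apply/from_g/sens.
- by move=> sens n n_gt0; apply/to_g/sens.
- by move=> sens n n_gt0; apply/from_g/sens.
Qed.
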